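(* Let $d\ge 1$ be an integer, $K=d+3$, and let $\overline{\gamma}=(\gamma_1,\dots,\gamma_d)\in\mathbb{R}^d$ satisfy condition (KM). Let $X$ be $\mathbb{R}^2$ with a norm $\|\cdot\|_X$ whose closed unit ball $BX$ is a symmetric convex polygon with $2K$ sides whose $K$ pairwise non-parallel sides have slopes $\gamma_1,\dots,\gamma_d,0,1,\infty$, and write $BX=\bigcap_{k=1}^K\{x:|x\cdot b_k|\le 1\}$ with vectors $b_1,\dots,b_K\in\mathbb{R}^2$. Then for every $\varepsilon>0$ there are constants $C,c>0$ (depending on $\varepsilon$) and arbitrarily large integers $n$ for which there exist sets $A=A(n)\subset B(0,1/2)$ with $|A|=n$ such that $$|(A-A)\cdot b_k|\le C n^{1/2+\varepsilon},\quad k=1,\dots,K$$ (in particular $|\Delta_X(A)|\le C' n^{1/2+\varepsilon}$ for a constant $C'$ independent of $n$), and $$\|x-x'\|_X\ge c\, n^{-1/2-\varepsilon}\quad\text{for all } x,x'\in A,\ x\ne x'.$$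
   Context: Slopes are with respect to the standard coordinates: the slope of a non-degenerate segment on the line $u_1x_1+u_2x_2+u_0=0$ is $-u_1/u_2$ (and $\infty$ if $u_2=0$). For a positive integer $L$ let $\mathcal{L}(L)=\{\overline{l}=(l_1,\dots,l_d)\in\mathbb{Z}^d: 0\le l_k<L\}$. A vector $\overline{\gamma}\in\mathbb{R}^d$ satisfies condition (KM) if for every positive integer $L$ and every $\varepsilon>0$, $\inf|\sum_{\overline{l}\in\mathcal{L}(L)} n_{\overline{l}}\gamma_1^{l_1}\cdots\gamma_d^{l_d}|\cdot(\max_{\overline{l}}|n_{\overline{l}}|)^{(1+\varepsilon)L^d}>0$, the infimum over all nonzero integer vectors $(n_{\overline{l}})_{\overline{l}\in\mathcal{L}(L)}$. $B(x,r)$ is the closed Euclidean ball; $|A|$ is cardinality; $A-A=\{a-a'\}$, $A\cdot v=\{a\cdot v:a\in A\}$; $\Delta_X(A)=\{\|x-x'\|_X:x,x'\in A\}$. The constants are independent of $n$. *)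

From HB Require Import structures.
From mathcomp Require Import all_boot all_order all_algebra.
From mathcomp Require Import all_classical all_reals all_analysis.
Set Implicit Arguments. Unset Strict Implicit. Unset Printing Implicit Defensive.
Import Order.TTheory GRing.Theory Num.Theory.
Local Open Scope ring_scope.

Definition dot2 {R : realType} (x y : R * R) : R := x.1 * y.1 + x.2 * y.2.
Definition sub2 {R : realType} (x y : R * R) : R * R := (x.1 - y.1, x.2 - y.2).

(* slope of a segment on the line u1 x1 + u2 x2 + u0 = 0, with u = (u1,u2):
   Some (-u1/u2), or None standing for infinity when u2 = 0 *)
Definition slope {R : realType} (u : R * R) : option R :=
  if u.2 == 0 then None else Some (- u.1 / u.2).

Definition normX {R : realType} (K : nat) (b : 'I_K -> R * R) (x : R * R) : R :=
  \big[Num.max/0]_(k < K) `|dot2 x (b k)|.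

(* condition (KM); index set L(L) = {ffun 'I_d -> 'I_L};
   "inf ... > 0" is written as the existence of a positive lower bound *)
Definition KM {R : realType} (d : nat) (gamma : 'I_d -> R) : Prop :=
  forall (L : nat), (0 < L)%N -> forall eps : R, 0 < eps ->
  exists delta : R, 0 < delta /\
    forall nv : {ffun {ffun 'I_d -> 'I_L} -> int},
      [exists l, nv l != 0] ->
      delta <= `| \sum_(l : {ffun 'I_d -> 'I_L})
                     (nv l)%:~R * \prod_(k < d) gamma k ^+ (nat_of_ord (l k)) |
               * powR ((\max_(l : {ffun 'I_d -> 'I_L}) `|nv l|%N)%:R)
                      ((1 + eps) * (L ^ d)%:R).

Definition diffdot {R : realType} (A : seq (R * R)) (v : R * R) : seq R :=
  undup [seq dot2 (sub2 a a') v | a <- A, a' <- A].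

Definition distset {R : realType} (K : nat) (b : 'I_K -> R * R)
  (A : seq (R * R)) : seq R :=
  undup [seq normX b (sub2 a a') | a <- A, a' <- A].

From HB Require Import structures.
From mathcomp Require Import all_boot all_order all_algebra.
From mathcomp Require Import all_classical all_reals all_analysis.
From mathcomp Require Import zify ring lra.
Set Implicit Arguments. Unset Strict Implicit. Unset Printing Implicit Defensive.
Import Order.TTheory GRing.Theory Num.Theory.
Local Open Scope ring_scope.

(* Fix a degree bound L and let V be the set of numbers sum_l m_l gamma^l, where l runs
   over the L^d exponent vectors with entries < L and 0 <= m_l < M; take A = lam (V x V),
   so n = |A| = M^(2 L^d).  For a side of slope s in {gamma_k, 0, 1}, the product
   (a - a') . b_k is a fixed multiple of (y - y') - s (x - x'), an integer combination of
   the monomials with exponents <= L and coefficients bounded by 2M (for the vertical side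
   use x - x'), so it takes at most (4M + 1)^((L+1)^d) values; choosing L so large that
   (L+1)^d <= (1 + 2 eps) L^d makes this O(n^(1/2 + eps)).  Condition (KM) separates
   distinct elements of V by delta M^(-(1 + eps) L^d), and the sides of slopes oo and 0
   turn this into the separation of A in the norm of X. *)

Section IntegerCombinations.
Variable R : comPzRingType.

Definition intcomb (I : finType) (G : I -> R) (c : I -> int) : R :=
  \sum_i (c i)%:~R * G i.

Definition is_intcomb (I : finType) (G : I -> R) (B : nat) (x : R) : Prop :=
  exists2 c : I -> int, (forall i, absz (c i) <= B)%N & x = intcomb G c.

Variables (I J : finType) (G : I -> R).

Lemma intcombB (c c' : I -> int) :
  intcomb G c - intcomb G c' = intcomb G (fun i => c i - c' i).
Proof. by rewrite /intcomb -sumrB; apply: eq_bigr => i _; rewrite rmorphB mulrBl. Qed.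

Lemma is_intcomb0 B : is_intcomb G B 0.
Proof. by exists (fun=> 0) => //; rewrite /intcomb big1 // => i _; rewrite mul0r. Qed.

Lemma is_intcombD B B' x y :
  is_intcomb G B x -> is_intcomb G B' y -> is_intcomb G (B + B') (x + y).
Proof.
move=> [c hc ->] [c' hc' ->]; exists (fun i => c i + c' i).
  by move=> i; have := hc i; have := hc' i; lia.
by rewrite /intcomb -big_split; apply: eq_bigr => i _; rewrite rmorphD mulrDl.
Qed.

Lemma is_intcombN B x : is_intcomb G B x -> is_intcomb G B (- x).
Proof.
move=> [c hc ->]; exists (fun i => - c i); first by move=> i; rewrite abszN.
by rewrite /intcomb -sumrN; apply: eq_bigr => i _; rewrite rmorphN mulNr.
Qed.

Lemma is_intcomb_le B B' x : (B <= B')%N -> is_intcomb G B x -> is_intcomb G B' x.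
Proof. by move=> hB [c hc ->]; exists c => // i; apply: leq_trans (hc i) hB. Qed.

Lemma is_intcomb_map (G' : J -> R) (h : I -> J) (a : R) B x :
  injective h -> (forall i, G' (h i) = a * G i) ->
  is_intcomb G B x -> is_intcomb G' B (a * x).
Proof.
move=> h_inj hG [c hc ->]; exists (fun j => \sum_(i | h i == j) c i).
  move=> j; case: (pickP (fun i => h i == j)) => [i0 /eqP hi0 | hj]; last first.
    by rewrite big_pred0.
  rewrite (big_pred1 i0) // => i /=; apply/eqP/eqP => [hi | -> //].
  by apply: h_inj; rewrite hi hi0.
rewrite /intcomb mulr_sumr (partition_big h predT) //=; apply: eq_bigr => j _.
rewrite rmorph_sum mulr_suml; apply: eq_bigr => i /eqP <-.
by rewrite hG mulrCA.
Qed.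

Lemma size_undup_scaled_intcomb B (a : R) (s : seq R) :
  {in s, forall y, exists2 x, is_intcomb G B x & y = a * x} ->
  (size (undup s) <= (B.*2).+1 ^ #|I|)%N.
Proof.
move=> hs; pose code (f : {ffun I -> 'I_(B.*2).+1}) :=
  a * intcomb G (fun i => (f i)%:Z - B%:Z).
apply: (@leq_trans (size (map code (enum {ffun I -> 'I_(B.*2).+1})))).
  apply: uniq_leq_size; first exact: undup_uniq.
  move=> y; rewrite mem_undup => /hs [_ [c hc ->] ->]; apply/mapP.
  exists [ffun i => inord (absz (c i + B%:Z))]; first by rewrite mem_enum.
  congr (_ * _); apply: eq_bigr => i _; have := hc i => hci.
  by rewrite ffunE inordK; [congr (_%:~R * _); lia | lia].
by rewrite size_map -cardE card_ffun card_ord.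
Qed.

End IntegerCombinations.

Section Monomials.
Variables (R : comPzRingType) (d : nat) (gamma : 'I_d -> R).

Definition monomial (L : nat) (l : {ffun 'I_d -> 'I_L}) : R :=
  \prod_(k < d) gamma k ^+ l k.

Definition widen_exponents L (l : {ffun 'I_d -> 'I_L}) : {ffun 'I_d -> 'I_L.+1} :=
  [ffun k => widen_ord (leqnSn L) (l k)].

Definition bump_exponent L (k0 : 'I_d) (l : {ffun 'I_d -> 'I_L}) :
    {ffun 'I_d -> 'I_L.+1} :=
  [ffun k => inord (l k + (k == k0))].

Lemma widen_exponents_inj L : injective (@widen_exponents L).
Proof.
move=> l l' /ffunP h; apply/ffunP => k; apply: val_inj.
by have := h k; rewrite !ffunE => /(congr1 val).
Qed.

Lemma ltn_ord_addb L (j : 'I_L) (b : bool) : (j + b < L.+1)%N.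
Proof. by have := ltn_ord j; case: b; lia. Qed.

Lemma bump_exponent_inj L k0 : injective (@bump_exponent L k0).
Proof.
move=> l l' /ffunP h; apply/ffunP => k; apply: val_inj.
have := h k; rewrite !ffunE => /(congr1 val) /=.
by rewrite !inordK ?ltn_ord_addb // => /addIn.
Qed.

Lemma monomial_widen L l : monomial (@widen_exponents L l) = monomial l.
Proof. by apply: eq_bigr => k _; rewrite ffunE. Qed.

Lemma monomial_bump L k0 l :
  monomial (@bump_exponent L k0 l) = gamma k0 * monomial l.
Proof.
rewrite /monomial (bigD1 k0) // [in RHS](bigD1 k0) //= mulrA -exprS.
rewrite ffunE eqxx inordK ?ltn_ord_addb // addn1; congr (_ * _).
by apply: eq_bigr => k /negbTE hk; rewrite ffunE hk inordK ?ltn_ord_addb ?addn0.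
Qed.

Lemma is_intcomb_widen L B x :
  is_intcomb (@monomial L) B x -> is_intcomb (@monomial L.+1) B x.
Proof.
move=> hx; rewrite -[x]mul1r; apply: is_intcomb_map hx.
  exact: widen_exponents_inj.
by move=> l; rewrite monomial_widen mul1r.
Qed.

Definition admissible_slope (o : option R) : Prop :=
  if o is Some s then [\/ s = 0, s = 1 | exists k, s = gamma k] else True.

Lemma is_intcomb_slopeM L B s x : admissible_slope (Some s) ->
  is_intcomb (@monomial L) B x -> is_intcomb (@monomial L.+1) B (s * x).
Proof.
case=> [-> _ | -> | [k ->]]; first by rewrite mul0r; apply: is_intcomb0.
  by rewrite mul1r; apply: is_intcomb_widen.
apply: is_intcomb_map; first exact: bump_exponent_inj.
exact: monomial_bump.
Qed.

End Monomials.

Arguments monomial {R d} gamma L l.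

Lemma KM_intcomb_ge (R : realType) d (gamma : 'I_d -> R) L eps :
  KM gamma -> (0 < L)%N -> 0 < eps ->
  exists2 delta : R, 0 < delta &
    forall (B : nat) (c : {ffun 'I_d -> 'I_L} -> int),
    (exists l, c l != 0) -> (forall l, absz (c l) <= B)%N ->
    delta / powR B%:R ((1 + eps) * (L ^ d)%:R) <= `|intcomb (monomial gamma L) c|.
Proof.
move=> hKM hL heps; have [delta [hdelta hKMd]] := hKM L hL eps heps.
exists delta => // B c [l0 hl0] hc.
have hB : 0 < B%:R :> R by rewrite ltr0n (leq_trans _ (hc l0)) // absz_gt0.
have /hKMd : [exists l, [ffun l => c l] l != 0] by apply/existsP; exists l0; rewrite ffunE.
under eq_bigr => l _ do rewrite ffunE.
move=> hd; rewrite ler_pdivrMr ?powR_gt0 //; apply: (le_trans hd).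
apply: ler_wpM2l => //; apply: ge0_ler_powR; rewrite ?nnegrE ?ler0n //.
  by apply: mulr_ge0; [lra | exact: ler0n].
by rewrite ler_nat; apply/bigmax_leqP => l _; rewrite ffunE.
Qed.

Section PlaneGeometry.
Variable R : realType.

Lemma dot2_slope_Some (u x : R * R) s :
  slope u = Some s -> dot2 x u = u.2 * (x.2 - s * x.1).
Proof.
rewrite /slope /dot2; case: eqP => // /eqP hu2 [<-].
by field.
Qed.

Lemma dot2_slope_None (u x : R * R) : slope u = None -> dot2 x u = u.1 * x.1.
Proof. by rewrite /slope /dot2; case: eqP => // -> _; rewrite mulr0 addr0 mulrC. Qed.

Lemma slope_None_snd (u : R * R) : slope u = None -> u.2 = 0.
Proof. by rewrite /slope; case: eqP. Qed.

Lemma slope_Some_snd (u : R * R) s : slope u = Some s -> u.2 != 0.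
Proof. by rewrite /slope; case: eqP. Qed.

Lemma slope0_fst (u : R * R) : slope u = Some 0 -> u.1 = 0.
Proof.
rewrite /slope; case: eqP => // /eqP hu2 [] /eqP.
by rewrite mulf_eq0 invr_eq0 (negbTE hu2) orbF oppr_eq0 => /eqP.
Qed.

Lemma axis_directions (ui u0 : R * R) : ui != (0, 0) ->
  slope ui = None -> slope u0 = Some 0 ->
  [/\ ui.2 = 0, u0.1 = 0 & 0 < Num.min `|ui.1| `|u0.2|].
Proof.
move=> hui0 /slope_None_snd hi h0; split => //; first exact: slope0_fst h0.
rewrite lt_min !normr_gt0 (slope_Some_snd h0) andbT.
by move: hui0; apply: contra; case: ui hi => ? ? /= -> /eqP ->.
Qed.

Variables (K : nat) (b : 'I_K -> R * R).

Lemma dot2_le_normX k x : `|dot2 x (b k)| <= normX b x.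
Proof. by rewrite /normX (bigmax_sup k) ?normr_ge0. Qed.

Lemma normX_mem x : normX b x \in 0 :: [seq `|dot2 x (b k)| | k <- enum 'I_K].
Proof.
rewrite /normX; elim/big_rec: _ => [|k v _ hv]; first by rewrite mem_head.
rewrite /Num.max; case: ifP => _ //.
by rewrite inE; apply/orP; right; apply: map_f; rewrite mem_enum.
Qed.

Lemma normX_ge_max ki k0 x : (b ki).2 = 0 -> (b k0).1 = 0 ->
  Num.min `|(b ki).1| `|(b k0).2| * Num.max `|x.1| `|x.2| <= normX b x.
Proof.
move=> hi h0; have := dot2_le_normX ki x; have := dot2_le_normX k0 x.
rewrite /dot2 hi h0 !mulr0 addr0 add0r !normrM => h2 h1.
case: (leP `|x.1| `|x.2|) => _.
  apply: (le_trans _ h2); rewrite mulrC; apply: ler_wpM2l => //.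
  by rewrite ge_min lexx orbT.
apply: (le_trans _ h1); rewrite mulrC; apply: ler_wpM2l => //.
by rewrite ge_min lexx.
Qed.

Lemma size_distset_le (A : seq (R * R)) X :
  (forall k, size (diffdot A (b k)) <= X)%N -> (size (distset b A) <= 1 + K * X)%N.
Proof.
move=> hX.
pose t : seq R := 0 :: flatten [seq [seq `|v| | v <- diffdot A (b k)] | k <- enum 'I_K].
apply: (@leq_trans (size t)).
  apply: uniq_leq_size; first exact: undup_uniq.
  move=> y; rewrite mem_undup => /allpairsP [[a a'] [ha ha' /= ->]].
  have := normX_mem (sub2 a a'); rewrite inE => /orP [/eqP -> | ]; first exact: mem_head.
  move=> /mapP [k _ ->]; rewrite inE; apply/orP; right.
  apply/flattenP; exists [seq `|v| | v <- diffdot A (b k)].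
    by apply: map_f; rewrite mem_enum.
  by apply: map_f; rewrite mem_undup; apply/allpairsP; exists (a, a').
rewrite /= add1n ltnS size_flatten /shape -map_comp.
rewrite -[X in (_ <= X * _)%N](size_enum_ord K) mulnC -sum1_size big_distrr /= muln1.
by rewrite /sumn foldrE big_map; apply: leq_sum => k _ /=; rewrite size_map.
Qed.

Lemma size_distset_le_mul (A : seq (R * R)) X (C P : R) :
  (forall k, size (diffdot A (b k)) <= X)%N -> X%:R <= C * P -> 0 <= C -> 1 <= P ->
  (size (distset b A))%:R <= (1 + K%:R * C) * P.
Proof.
move=> hX hXP hC hP; apply: (le_trans (y := (1 + K * X)%N%:R)).
  by rewrite ler_nat size_distset_le.
rewrite natrD natrM mulrDl mul1r -mulrA; apply: lerD => //.
exact: ler_wpM2l.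
Qed.

End PlaneGeometry.

Lemma dot2_intcomb (R : realType) d (gamma : 'I_d -> R) L B (u : R * R) :
  admissible_slope gamma (slope u) ->
  exists a, forall x y,
    is_intcomb (monomial gamma L) B x -> is_intcomb (monomial gamma L) B y ->
    exists2 z, is_intcomb (monomial gamma L.+1) (B + B) z & dot2 (x, y) u = a * z.
Proof.
case hu: (slope u) => [s|] /= hs.
  exists u.2 => x y hx hy; exists (y - s * x); last exact: dot2_slope_Some.
  exact: is_intcombD (is_intcomb_widen hy) (is_intcombN (is_intcomb_slopeM hs hx)).
exists u.1 => x y hx _; exists x; last exact: dot2_slope_None.
by apply: is_intcomb_le (is_intcomb_widen hx); rewrite leq_addr.
Qed.

Lemma admissible_slopes (R : realType) d (gamma : 'I_d -> R) (b : 'I_(d + 3) -> R * R) :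
  (forall (k : 'I_(d + 3)) (hk : (k < d)%N), slope (b k) = Some (gamma (Ordinal hk))) ->
  (forall k : 'I_(d + 3), nat_of_ord k = d -> slope (b k) = Some 0) ->
  (forall k : 'I_(d + 3), nat_of_ord k = d.+1 -> slope (b k) = Some 1) ->
  (forall k : 'I_(d + 3), nat_of_ord k = d.+2 -> slope (b k) = None) ->
  forall k, admissible_slope gamma (slope (b k)).
Proof.
move=> hsl hs0 hs1 hsinf k; have [hk | hk] := ltnP k d.
  by rewrite (hsl k hk); apply: Or33; eexists.
have : k = d :> nat \/ k = d.+1 :> nat \/ k = d.+2 :> nat by have := ltn_ord k; lia.
by case=> [/hs0 | [/hs1 | /hsinf]] ->; [apply: Or31 | apply: Or32 |].
Qed.

Lemma absz_sub_ord_le n (i j : 'I_n) : (absz ((i : nat)%:Z - (j : nat)%:Z) <= n)%N.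
Proof. by have := ltn_ord i; have := ltn_ord j; lia. Qed.

Section Grid.
Variables (R : realType) (d : nat) (gamma : 'I_d -> R) (L M : nat) (lam : R).

Local Notation exponents := {ffun 'I_d -> 'I_L}.
Local Notation coefficients := {ffun exponents -> 'I_M}.

Definition grid_value (m : coefficients) : R :=
  intcomb (monomial gamma L) (fun l => (m l : nat)%:Z).

Definition grid : seq (R * R) :=
  [seq (lam * grid_value m1, lam * grid_value m2)
     | m1 <- enum coefficients, m2 <- enum coefficients].

Lemma mem_grid x :
  x \in grid -> exists m1 m2, x = (lam * grid_value m1, lam * grid_value m2).
Proof. by move=> /allpairsP [[m1 m2] [_ _ ->]]; exists m1, m2. Qed.

Lemma size_grid : size grid = (M ^ (L ^ d * 2))%N.
Proof.
rewrite size_allpairs -cardE card_ffun card_ffun !card_ord.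
by rewrite -expnD addnn -mul2n mulnC.
Qed.

Lemma grid_valueB_intcomb m m' :
  is_intcomb (monomial gamma L) M (grid_value m - grid_value m').
Proof.
by rewrite intcombB; exists (fun l => (m l : nat)%:Z - (m' l : nat)%:Z) => // l;
  apply: absz_sub_ord_le.
Qed.

Lemma grid_value_sep sigma :
  (forall c : exponents -> int, (exists l, c l != 0) ->
     (forall l, absz (c l) <= M)%N -> sigma <= `|intcomb (monomial gamma L) c|) ->
  forall m m', m != m' -> sigma <= `|grid_value m - grid_value m'|.
Proof.
move=> hsigma m m' hm; rewrite intcombB; apply: hsigma.
  case: (pickP (fun l => m l != m' l)) => [l hl | heq].
    by exists l; move: hl; rewrite -val_eqE /=; lia.
  by case/eqP: hm; apply/ffunP => l; apply/eqP/negbFE/heq.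
by move=> l; apply: absz_sub_ord_le.
Qed.

Lemma grid_value_inj sigma : 0 < sigma ->
  (forall m m', m != m' -> sigma <= `|grid_value m - grid_value m'|) ->
  injective grid_value.
Proof.
move=> hsigma hsep m m' e; apply/eqP; apply: contraT => /hsep.
by rewrite e subrr normr0 leNgt hsigma.
Qed.

Lemma uniq_grid : lam != 0 -> injective grid_value -> uniq grid.
Proof.
move=> hlam hinj; apply: allpairs_uniq; try exact: enum_uniq.
by move=> [m1 m2] [m1' m2'] _ _ /= [/(mulfI hlam)/hinj -> /(mulfI hlam)/hinj ->].
Qed.

Lemma norm_grid_value_le m :
  `|grid_value m| <= M%:R * \sum_l `|monomial gamma L l|.
Proof.
rewrite mulr_sumr; apply: (le_trans (ler_norm_sum _ _ _)); apply: ler_sum => l _.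
by rewrite normrM ler_wpM2r // pmulrn ger0_norm // ler_nat ltnW.
Qed.

Lemma grid_subset_ball :
  `|lam| * (M%:R * \sum_l `|monomial gamma L l|) <= 4^-1 ->
  {in grid, forall x, x.1 ^+ 2 + x.2 ^+ 2 <= (2^-1) ^+ 2}.
Proof.
move=> hlam x /mem_grid [m1 [m2 ->]] /=.
have hb m : `|lam * grid_value m| <= 4^-1.
  rewrite normrM; apply: le_trans hlam; apply: ler_wpM2l => //.
  exact: norm_grid_value_le.
have -> : (2^-1 : R) ^+ 2 = 4^-1 by rewrite expr2 -invfM; congr (_^-1); lra.
have := hb m1; have := hb m2; rewrite !ler_norml => /andP [? ?] /andP [? ?].
nra.
Qed.

Lemma size_diffdot_grid (u : R * R) a :
  (forall x y, is_intcomb (monomial gamma L) M x -> is_intcomb (monomial gamma L) M y ->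
     exists2 z, is_intcomb (monomial gamma L.+1) (M + M) z & dot2 (x, y) u = a * z) ->
  (size (diffdot grid u) <= (4 * M).+1 ^ (L.+1 ^ d))%N.
Proof.
move=> hu; have -> : (4 * M)%N = (M + M).*2 by lia.
have -> : (L.+1 ^ d)%N = #|{ffun 'I_d -> 'I_L.+1}| by rewrite card_ffun !card_ord.
apply: (size_undup_scaled_intcomb (G := monomial gamma L.+1) (a := lam * a)).
move=> _ /allpairsP [[x x'] [/mem_grid [m1 [m2 ->]] /mem_grid [m1' [m2' ->]] ->]] /=.
have [z hz hdot] := hu _ _ (grid_valueB_intcomb m1 m1') (grid_valueB_intcomb m2 m2').
exists z => //; rewrite -mulrA -hdot /dot2 /sub2 /=; ring.
Qed.

Lemma grid_sep K (b : 'I_K -> R * R) ki k0 sigma : 0 < lam ->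
  (forall m m', m != m' -> sigma <= `|grid_value m - grid_value m'|) ->
  (b ki).2 = 0 -> (b k0).1 = 0 ->
  {in grid &, forall x x', x != x' ->
    Num.min `|(b ki).1| `|(b k0).2| * (lam * sigma) <= normX b (sub2 x x')}.
Proof.
move=> hlam hsep hi h0 _ _ /mem_grid [m1 [m2 ->]] /mem_grid [m1' [m2' ->]] hne.
apply: (le_trans _ (normX_ge_max _ hi h0)); apply: ler_wpM2l.
  by rewrite le_min !normr_ge0.
rewrite le_max /sub2 /= -!mulrBr !normrM (gtr0_norm hlam) !ler_pM2l //.
case: (eqVneq m1 m1') => [e1 | n1]; last by rewrite (hsep _ _ n1).
have n2 : m2 != m2' by apply: contraNneq hne => ->; rewrite e1.
by rewrite (hsep _ _ n2) orbT.
Qed.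

End Grid.

(* Bernoulli's inequality (1 - t)^n >= 1 - n t at t = 1 / (x + 1), denominators cleared. *)
Lemma bernoulli_cleared (R : realFieldType) (x : R) n : 0 <= x ->
  (x + 1) ^+ n * (x + 1 - n%:R) <= x ^+ n * (x + 1).
Proof.
move=> hx; elim: n => [|n IH]; first by rewrite !expr0 subr0.
have h1 : 0 <= (x + 1) ^+ n by apply: exprn_ge0; lra.
have h2 : 0 <= n%:R * (x + 1) ^+ n :> R by apply: mulr_ge0.
have h3 : x * ((x + 1) ^+ n * (x + 1 - n%:R)) <= x * (x ^+ n * (x + 1)).
  exact: ler_wpM2l.
have -> : (x + 1) ^+ n.+1 * (x + 1 - n.+1%:R) =
    x * ((x + 1) ^+ n * (x + 1 - n%:R)) - n%:R * (x + 1) ^+ n.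
  by rewrite exprS -natr1; ring.
rewrite exprS; lra.
Qed.

Lemma exists_degree_bound (R : realType) d (eps : R) : (0 < d)%N -> 0 < eps ->
  exists2 L, (0 < L)%N &
    1 <= eps * (L ^ d)%:R /\ (L.+1 ^ d)%:R <= (1 + 2 * eps) * (L ^ d)%:R.
Proof.
move=> hd heps; pose L := ((Num.truncn (d.+1%:R / eps)).+1 + d.*2)%N.
have hLeps : d.+1%:R <= eps * L%:R.
  rewrite -ler_pdivrMl // mulrC; apply: (le_trans (ltW (truncnS_gt _))).
  by rewrite ler_nat leq_addr.
have hL2d : d.*2%:R <= L%:R :> R by rewrite ler_nat leq_addl.
have hLd : L%:R <= (L ^ d)%:R :> R.
  by rewrite ler_nat -{1}(expn1 L) leq_pexp2l.
exists L => //; split.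
  have : eps * L%:R <= eps * (L ^ d)%:R by rewrite ler_pM2l.
  have : 1 <= d.+1%:R :> R by rewrite ler1n.
  lra.
have hb := bernoulli_cleared d (ler0n R L).
rewrite !natrX -natr1 in hb *.
set P := _ ^+ d in hb *; set Q := _ ^+ d in hb *.
have hQ : 0 <= Q by apply: exprn_ge0.
have hd2 : d.*2%:R = 2 * d%:R :> R by rewrite -muln2 natrM mulrC.
rewrite hd2 in hL2d; rewrite -natr1 in hLeps.
have hd0 : 0 <= d%:R :> R by [].
have hpos : 0 < L%:R + 1 - d%:R :> R by lra.
have hle : L%:R + 1 <= (1 + 2 * eps) * (L%:R + 1 - d%:R).
  have : 0 <= eps * (L%:R - 2 * d%:R) by apply: mulr_ge0; lra.
  nra.
rewrite -(ler_pM2r hpos); apply: (le_trans hb).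
by rewrite [(1 + 2 * eps) * Q]mulrC -mulrA; apply: ler_wpM2l.
Qed.

Lemma powR_natX (R : realType) (m k : nat) (r : R) :
  powR (m ^ k)%:R r = powR m%:R (k%:R * r).
Proof. by rewrite natrX -powR_mulrn // powRrM. Qed.

Section GridExponents.
Variables (R : realType) (M D : nat) (eps : R).
Hypotheses (hM : (0 < M)%N) (heps : 0 < eps).

Let n := (M ^ (D * 2))%N.

Lemma leq_grid_size : (0 < D)%N -> (M <= n)%N.
Proof.
move=> hD; apply: (@leq_trans (M ^ 1)); first by rewrite expn1.
by apply: leq_pexp2l; rewrite // muln_gt0 hD.
Qed.

Lemma powR_grid_size_ge1 : 1 <= powR n%:R (2^-1 + eps).
Proof.
have hn : 1 <= n%:R :> R by rewrite ler1n expn_gt0 hM.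
have h0 : 0 <= 2^-1 + eps :> R by rewrite addr_ge0 ?invr_ge0 ?ltW.
by have := ler_powR hn h0; rewrite powRr0.
Qed.

Lemma grid_count_le_powR E : E%:R <= (1 + 2 * eps) * D%:R ->
  ((4 * M).+1 ^ E)%:R <= (5 ^ E)%:R * powR n%:R (2^-1 + eps).
Proof.
move=> hE; rewrite powR_natX natrM.
have -> : (D%:R * 2%:R * (2^-1 + eps) = (1 + 2 * eps) * D%:R :> R) by field.
apply: (@le_trans _ _ ((5 * M) ^ E)%N%:R).
  by rewrite ler_nat; case: (E) => [|e]; rewrite // leq_exp2r //; lia.
rewrite expnMn natrM ler_wpM2l // natrX -powR_mulrn //.
by apply: ler_powR; rewrite // ler1n.
Qed.

Lemma powR_grid_sep_le : 1 <= eps * D%:R ->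
  powR n%:R (- 2^-1 - eps) <= (M%:R * powR M%:R ((1 + eps) * D%:R))^-1.
Proof.
move=> hD; have hM1 : 1 <= M%:R :> R by rewrite ler1n.
rewrite -[M%:R in X in X * _](powRr1 (ler0n _ _)) -powRD ?pnatr_eq0 -?lt0n ?hM ?implybT //.
rewrite -powRN powR_natX natrM; apply: ler_powR => //; nra.
Qed.

Lemma norm_grid_scale_le (G : R) : 0 <= G ->
  `|(4 * M%:R * (G + 1))^-1| * (M%:R * G) <= 4^-1.
Proof.
move=> hG; have hM0 : M%:R != 0 :> R by rewrite pnatr_eq0 -lt0n.
rewrite ger0_norm; last by rewrite invr_ge0 !mulr_ge0 //; lra.
have -> : (4 * M%:R * (G + 1))^-1 * (M%:R * G) = 4^-1 * (G / (G + 1)).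
  by field; rewrite hM0 gt_eqF //; lra.
by apply: ler_piMr; rewrite ?invr_ge0 // ler_pdivrMr; lra.
Qed.

Lemma grid_sep_ge_powR (G mu delta : R) :
  0 <= G -> 0 <= mu -> 0 <= delta -> 1 <= eps * D%:R ->
  mu * delta / (4 * (G + 1)) * powR n%:R (- 2^-1 - eps) <=
  mu * ((4 * M%:R * (G + 1))^-1 * (delta / powR M%:R ((1 + eps) * D%:R))).
Proof.
move=> hG hmu hdelta hD; have hM0 : 0 < M%:R :> R by rewrite ltr0n.
have -> : mu * ((4 * M%:R * (G + 1))^-1 * (delta / powR M%:R ((1 + eps) * D%:R))) =
    mu * delta / (4 * (G + 1)) * (M%:R * powR M%:R ((1 + eps) * D%:R))^-1.
  by field; rewrite !gt_eqF ?powR_gt0 //; lra.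
apply: ler_wpM2l; first by rewrite divr_ge0 ?mulr_ge0 //; lra.
exact: powR_grid_sep_le.
Qed.

End GridExponents.

Theorem lemma2p1 (R : realType) (d : nat) (gamma : 'I_d -> R)
  (b : 'I_(d + 3) -> R * R) :
  (1 <= d)%N ->
  KM gamma ->
  (* all b_k nonzero *)
  (forall k, b k != (0, 0)) ->
  (* slopes of the sides: gamma_1..gamma_d, 0, 1, infinity *)
  (forall k : 'I_(d + 3), forall (hk : (k < d)%N),
      slope (b k) = Some (gamma (Ordinal hk))) ->
  (forall k : 'I_(d + 3), nat_of_ord k = d -> slope (b k) = Some 0) ->
  (forall k : 'I_(d + 3), nat_of_ord k = d.+1 -> slope (b k) = Some 1) ->
  (forall k : 'I_(d + 3), nat_of_ord k = d.+2 -> slope (b k) = None) ->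
  (* the K slopes are pairwise distinct (sides pairwise non-parallel) *)
  (forall k k' : 'I_(d + 3), k != k' -> slope (b k) != slope (b k')) ->
  (* every constraint gives a genuine side: BX has 2K sides *)
  (forall k : 'I_(d + 3), exists x y : R * R, x != y /\
      normX b x <= 1 /\ normX b y <= 1 /\
      dot2 x (b k) = 1 /\ dot2 y (b k) = 1) ->
  forall eps : R, 0 < eps ->
  exists C c C' : R, 0 < C /\ 0 < c /\ 0 < C' /\
  forall N : nat, exists n : nat, (N <= n)%N /\
  exists A : seq (R * R),
    uniq A /\ size A = n /\
    (forall x, x \in A -> x.1 ^+ 2 + x.2 ^+ 2 <= (2^-1) ^+ 2) /\
    (forall k, (size (diffdot A (b k)))%:R <= C * powR n%:R (2^-1 + eps)) /\
    (size (distset b A))%:R <= C' * powR n%:R (2^-1 + eps) /\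
    (forall x x', x \in A -> x' \in A -> x != x' ->
        c * powR n%:R (- 2^-1 - eps) <= normX b (sub2 x x')).
Proof.
move=> hd hKM hb0 hsl hs0 hs1 hsinf _ _ eps heps.
have [L hL [hLeps hLsucc]] := exists_degree_bound hd heps.
have [delta hdelta hKMd] := KM_intcomb_ge hKM hL heps.
pose ki : 'I_(d + 3) := rshift d ord_max; pose k0 : 'I_(d + 3) := rshift d ord0.
have [hki hk0 hmu] := axis_directions (hb0 ki) (hsinf ki (addn2 d)) (hs0 k0 (addn0 d)).
pose G := \sum_l `|monomial gamma L l|; have hG : 0 <= G by apply: sumr_ge0.
pose C : R := (5 ^ (L.+1 ^ d))%:R; have hC : 0 < C by rewrite ltr0n expn_gt0.
exists C, (Num.min `|(b ki).1| `|(b k0).2| * delta / (4 * (G + 1))), (1 + (d + 3)%:R * C).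
split=> //; split; first by rewrite !divr_gt0 ?mulr_gt0 //; lra.
split=> [|N]; first by rewrite ltr_pwDl // mulr_ge0 // ltW.
pose M := N.+1; pose lam : R := (4 * M%:R * (G + 1))^-1.
have hlam : 0 < lam by rewrite invr_gt0 !mulr_gt0 //; lra.
exists (M ^ (L ^ d * 2))%N; split.
  by apply: leq_trans (leqnSn N) (leq_grid_size (ltn0Sn N) _); rewrite expn_gt0 hL.
have hsep := grid_value_sep (fun c hc hcb => hKMd M c hc hcb).
have hcount k : (size (diffdot (grid gamma L M lam) (b k)) <= (4 * M).+1 ^ (L.+1 ^ d))%N.
  have [a ha] := dot2_intcomb L M (admissible_slopes hsl hs0 hs1 hsinf k).
  exact: size_diffdot_grid ha.
have hXP := grid_count_le_powR (ltn0Sn N) heps hLsucc.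
exists (grid gamma L M lam); split.
  apply: uniq_grid; first by rewrite gt_eqF.
  by apply: grid_value_inj hsep; rewrite divr_gt0 ?powR_gt0.
split; first exact: size_grid.
split; first by apply: grid_subset_ball; exact: norm_grid_scale_le.
split; first by move=> k; apply: le_trans hXP; rewrite ler_nat.
split; first exact: size_distset_le_mul hcount hXP (ltW hC)
  (powR_grid_size_ge1 _ (ltn0Sn N) heps).
move=> x x' hx hx' hne; apply: le_trans (grid_sep hlam hsep hki hk0 hx hx' hne).
by apply: grid_sep_ge_powR => //; exact: ltW.
Qed.
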